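(* Under Algorithm 2(a) below, let $Q(t)$ be the size of the sender's queue after the arrivals in slot $t$ have been appended (end of Step 3). Then $$Q(t)=\dim V(t)-\dim V_\Delta(t),$$ where $V(t)=\mathbb{F}_q^{A(t)}$ with $A(t)$ the total number of arrivals up to and including slot $t$, and $V_\Delta(t)=\bigcap_{j=1}^nV_j(t)$ with $V_j(t)$ the knowledge space of receiver $j$ at the end of Step 3 of slot $t$.
   Context: Model: a sender broadcasts to $n$ receivers over a slotted packet erasure broadcast channel; packets are vectors over $\mathbb{F}_q$, indexed by arrival order; each slot some packets may arrive at the sender (just after the slot begins); the sender transmits at most one linear combination of its stored packets per slot; each receiver either receives it or suffers an erasure, and the sender learns via perfect feedback before the end of the slot which receivers received it. The knowledge space of a node is the space of global coefficient vectors (with respect to all original packets arrived so far) of linear combinations it can compute. Algorithm 2(a) (field size $q>n$): The sender stores queue contents $\mathbf{y}_1,\dots,\mathbf{y}_Q$ and matrices $B,B_1,\dots,B_n$ with $Q$ columns whose rows are local coefficient vectors (with respect to the current queue contents); initially all empty. In every slot: (Step 3) if $a$ packets arrive, append them to the queue, set $B=I_Q$ for the new $Q$, append $a$ zero columns to each $B_j$. (Step 4) If the queue is nonempty, choose $\mathbf{g}\in\mathrm{span}(B)$ with $\mathbf{g}\notin\mathrm{span}(B_j)$ for every $j$ with $\mathrm{span}(B_j)\neq\mathrm{span}(B)$ (row spaces), transmit $\sum_i g_i\mathbf{y}_i$; else $\mathbf{g}=\mathbf{0}$, transmit nothing. (Step 5) If $\mathbf{g}\ne\mathbf{0}$ and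 receiver $j$ received it, append $\mathbf{g}$ as a row of $B_j$. (Step 6) $B_\Delta$: a basis of $\bigcap_j\mathrm{span}(B_j)$; $B'$: completion of $B_\Delta$ to a basis of $\mathrm{span}(B)$, $B''=B'\setminus B_\Delta$; $B_j'$: completion of $B_\Delta$ to a basis of $\mathrm{span}(B_j)$ with $B_j'':=B_j'\setminus B_\Delta\subseteq\mathrm{span}(B'')$. (Step 7) Replace the queue by $\sum_i h_i\mathbf{y}_i$, $\mathbf{h}\in B''$. (Step 8) Replace $B_j$ by $X_j$ where $B_j''=X_jB''$; set $B=I_{|B''|}$. *)

From HB Require Import structures.
From mathcomp Require Import all_boot all_order all_algebra all_field.
Set Implicit Arguments. Unset Strict Implicit. Unset Printing Implicit Defensive.
Import GRing.Theory.
Local Open Scope ring_scope.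

(* Global coefficient vectors live in 'rV[F]_N, where N is any bound on the
   total number of packets that have arrived in the slots considered
   (vectors of F^{A(t)} are embedded by zero-padding; packet i (0-based,
   arrival order) has global coefficient vector evec i). *)

Definition evec (F : fieldType) (N i : nat) : 'rV[F]_N :=
  \row_(l < N) ((l : nat) == i)%:R.

Definition Vspace (F : fieldType) (N a : nat) : {vspace 'rV[F]_N} :=
  <<[seq evec F N i | i <- iota 0 a]>>%VS.

Definition Acum (arr : nat -> nat) (t : nat) : nat :=
  (\sum_(1 <= s < t.+1) arr s)%N.

Definition idrows (F : fieldType) (Q : nat) : seq 'rV[F]_Q :=
  [seq row i (1%:M : 'M[F]_Q) | i <- enum 'I_Q].

Definition rowsmx (F : fieldType) (Q : nat) (s : seq 'rV[F]_Q) : 'M[F]_(size s, Q) :=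
  \matrix_(k < size s, l < Q) (nth 0 s k) 0 l.

(* Joint state of the system:
   sQ   = queue size Q,
   sC   = global coefficient vectors (rows) of the queue contents y_1..y_Q,
   sB j = rows of the sender's matrix B_j (local coefficient vectors),
   sR j = global coefficient vectors of the packets received by receiver j
          (its knowledge space is their span). *)
Record state (F : fieldType) (n N : nat) := mkState {
  sQ : nat;
  sC : 'M[F]_(sQ, N);
  sB : 'I_n -> seq 'rV[F]_sQ;
  sR : 'I_n -> seq 'rV[F]_N }.

Definition init_state (F : fieldType) (n N : nat) : state F n N :=
  @mkState F n N 0 0 (fun _ => [::]) (fun _ => [::]).

(* Step 3: a packets arrive; the previous total number of arrivals is off.
   The new packets (global coefficient vectors evec (off+k)) are appended to
   the queue, and a zero columns are appended to each B_j.  (B := I_Q is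
   not stored: it is reset to I_Q here and used in Steps 4 and 6.) *)
Definition arrive (F : fieldType) (n N : nat) (off a : nat) (s : state F n N)
  : state F n N :=
  @mkState F n N (sQ s + a)
    (col_mx (sC s) (\matrix_(k < a, l < N) ((l : nat) == off + k)%:R))
    (fun j => [seq row_mx x (0 : 'rV[F]_a) | x <- sB s j])
    (sR s).

(* Steps 4-8 of a slot, with erasure pattern rec (rec j = receiver j
   received the transmission), starting from the state s at the end of
   Step 3 and ending with the state s' at the end of Step 8.  All choices of
   the algorithm (g, B_Delta, B', B_j') are existentially chosen. *)
Definition step48 (F : fieldType) (n N : nat) (rec : 'I_n -> bool)
  (s s' : state F n N) : Prop :=
  let Q := sQ s in
  let B := idrows F Q in
  exists g : 'rV[F]_Q,
    (if (0 < Q)%N then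
       g \in <<B>>%VS /\
       (forall j, (<<sB s j>> != <<B>>)%VS -> g \notin <<sB s j>>%VS)
     else g = 0) /\
    let B5 := fun j => if (g != 0) && rec j then rcons (sB s j) g else sB s j in
    let R5 := fun j => if (0 < Q)%N && rec j
                       then rcons (sR s j) (g *m sC s) else sR s j in
    exists (BD B2 : seq 'rV[F]_Q) (Bj2 : 'I_n -> seq 'rV[F]_Q),
      basis_of (\bigcap_(j < n) <<B5 j>>)%VS BD /\
      basis_of <<B>>%VS (BD ++ B2) /\
      (forall j, basis_of <<B5 j>>%VS (BD ++ Bj2 j) /\
                 all (fun v => v \in <<B2>>%VS) (Bj2 j)) /\
      exists X : 'I_n -> seq 'rV[F]_(size B2),
        (forall j, [seq x *m rowsmx B2 | x <- X j] = Bj2 j) /\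
        s' = @mkState F n N (size B2) (rowsmx B2 *m sC s) X R5.

(* Invariant: with C the matrix of global coefficient vectors of the queue,
   x |-> x C is injective, V(t) = V_Delta(t) (+) im C, and receiver j knows
   V_Delta(t) (+) (span B_j) C.  Arrivals extend V(t) and im C by the same
   fresh unit vectors.  Steps 6-8 move the common part B_Delta of the B_j from
   the queue into V_Delta; the new V_Delta is again the intersection of the
   knowledge spaces because U |-> V_Delta (+) U C commutes with intersections.
   Counting dimensions gives Q(t) = dim V(t) - dim V_Delta(t). *)

From HB Require Import structures.
From mathcomp Require Import all_boot all_order all_algebra all_field.
Set Implicit Arguments. Unset Strict Implicit. Unset Printing Implicit Defensive.
Import GRing.Theory.
Local Open Scope ring_scope.

Section DirectImage.
Variables (F : fieldType) (uT vT : vectType F).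
Variables (f : 'Hom(uT, vT)) (W : {vspace vT}).
Hypotheses (f_inj : lker f == 0%VS) (W_disj : (W :&: f @: fullv)%VS = 0%VS).

Lemma addv_limg_cap (S T : {vspace uT}) :
  (W + f @: (S :&: T))%VS = ((W + f @: S) :&: (W + f @: T))%VS.
Proof.
apply/eqP; rewrite eqEsubv subv_cap !addvS ?limgS ?capvSl ?capvSr //=.
apply/subvP => v; rewrite memv_cap.
case/andP=> /memv_addP[w1 w1W [_ /memv_imgP[s sS ->] ->]].
case/memv_addP=> [w2 w2W [_ /memv_imgP[u uT' ->] e]].
have fsu : f (s - u) \in (W :&: f @: fullv)%VS.
  rewrite memv_cap memv_img ?memvf // andbT linearB /=.
  have -> : f s - f u = w2 - w1.
    by apply/eqP; rewrite subr_eq addrAC -e addrC addKr.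
  exact: memvB.
move: fsu; rewrite W_disj memv0 linearB /= subr_eq0 => /eqP/(lker0P f_inj) su.
by rewrite memv_add // memv_img // memv_cap sS su.
Qed.

Lemma bigcapv_addv_limg n (S : 'I_n -> {vspace uT}) : (0 < n)%N ->
  (\bigcap_(j < n) (W + f @: S j))%VS = (W + f @: \bigcap_(j < n) S j)%VS.
Proof.
case: n S => // n S _; elim: n S => [|n IHn] S; first by rewrite !big_ord1.
by rewrite big_ord_recr IHn //= [in RHS]big_ord_recr addv_limg_cap.
Qed.

Lemma addv_limg_disjoint (U U' : {vspace uT}) :
  (U :&: U')%VS = 0%VS -> ((W + f @: U) :&: f @: U')%VS = 0%VS.
Proof.
move=> UU'; apply/eqP; rewrite -subv0 -W_disj subv_cap; apply/andP; split.
  apply: subv_trans (capvS (subvv _) (addvSr W _)) _.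
  by rewrite -addv_limg_cap UU' limg0 addv0.
exact: subv_trans (capvSr _ _) (limgS _ (subvf _)).
Qed.

End DirectImage.

Definition mxlfun (F : fieldType) m N (C : 'M[F]_(m, N)) : 'Hom('rV[F]_m, 'rV[F]_N) :=
  linfun (mulmxr C).

Section MatrixMap.
Variable F : fieldType.

Lemma mxlfunE m N (C : 'M[F]_(m, N)) x : mxlfun C x = x *m C.
Proof. exact: lfunE. Qed.

Lemma mxlfun_mulmx m p N (M : 'M[F]_(m, p)) (C : 'M[F]_(p, N)) :
  mxlfun (M *m C) = (mxlfun C \o mxlfun M)%VF.
Proof. by apply/lfunP => x; rewrite comp_lfunE !mxlfunE mulmxA. Qed.

Lemma span_idrows Q : <<idrows F Q>>%VS = fullv.
Proof.
apply/eqP; rewrite eqEsubv subvf; apply/subvP => v _.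
rewrite (row_sum_delta v); apply: memv_suml => i _; apply/memvZ/memv_span.
by rewrite -row1; apply/map_f/mem_enum.
Qed.

Lemma limg_mxlfun m N (C : 'M[F]_(m, N)) :
  (mxlfun C @: fullv)%VS = <<[seq row i C | i <- enum 'I_m]>>%VS.
Proof.
rewrite -span_idrows limg_span -map_comp; congr <<_>>%VS.
by apply: eq_map => i /=; rewrite mxlfunE -row_mul mul1mx.
Qed.

Lemma rows_rowsmx Q (s : seq 'rV[F]_Q) :
  [seq row i (rowsmx s) | i <- enum 'I_(size s)] = s.
Proof.
have rowE (i : 'I_(size s)) : row i (rowsmx s) = nth 0 s i.
  by apply/rowP => l; rewrite !mxE.
transitivity [seq nth 0 s i | i <- map val (enum 'I_(size s))].
  by rewrite -map_comp; apply: eq_map.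
by rewrite val_enum_ord -/(mkseq _ _) mkseq_nth.
Qed.

Lemma lker_mxlfun_rowsmx Q (s : seq 'rV[F]_Q) :
  free s -> lker (mxlfun (rowsmx s)) == 0%VS.
Proof.
move=> free_s; have /freeP free_t : free (in_tuple s) by [].
apply/lker0P => x y /eqP; rewrite !mxlfunE -subr_eq0 -mulmxBl => /eqP xy0.
apply/eqP; rewrite -subr_eq0; apply/eqP/rowP => i; rewrite [RHS]mxE.
apply: (free_t (fun i => (x - y) 0 i)); rewrite -[RHS]xy0 mulmx_sum_row.
by apply: eq_bigr => j _; congr (_ *: _); apply/rowP => l; rewrite !mxE.
Qed.

Lemma limg_mxlfun_col_mx m k N (C : 'M[F]_(m, N)) (E : 'M[F]_(k, N)) :
  (mxlfun (col_mx C E) @: fullv = mxlfun C @: fullv + mxlfun E @: fullv)%VS.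
Proof.
apply/eqP; rewrite eqEsubv subv_add; apply/andP; split; last (apply/andP; split).
- apply/subvP => _ /memv_imgP[z _ ->]; rewrite -(hsubmxK z) mxlfunE mul_row_col.
  by apply: memv_add; rewrite -mxlfunE memv_img ?memvf.
- apply/subvP => _ /memv_imgP[x _ ->].
  by rewrite mxlfunE -[x *m C]addr0 -(mul0mx _ E) -mul_row_col -mxlfunE memv_img ?memvf.
- apply/subvP => _ /memv_imgP[y _ ->].
  by rewrite mxlfunE -[y *m E]add0r -(mul0mx _ C) -mul_row_col -mxlfunE memv_img ?memvf.
Qed.

End MatrixMap.

Definition arrival_mx (F : fieldType) N off k : 'M[F]_(k, N) :=
  \matrix_(i < k, l < N) ((l : nat) == off + i)%N%:R.

Section Arrivals.
Variables (F : fieldType) (N : nat).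

Lemma row_arrival_mx off k (i : 'I_k) :
  row i (arrival_mx F N off k) = evec F N (off + i)%N.
Proof. by apply/rowP => l; rewrite !mxE. Qed.

Lemma VspaceD a k :
  Vspace F N (a + k)%N = (Vspace F N a + mxlfun (arrival_mx F N a k) @: fullv)%VS.
Proof.
rewrite /Vspace iotaD map_cat span_cat add0n limg_mxlfun; congr (_ + <<_>>)%VS.
rewrite (eq_map (@row_arrival_mx a k)) -[a in iota a]addn0 iotaDl -val_enum_ord.
by rewrite -!map_comp.
Qed.

Lemma Vspace_coef0 a (v : 'rV[F]_N) (l : 'I_N) :
  v \in Vspace F N a -> (a <= l)%N -> v 0 l = 0.
Proof.
move=> /coord_span -> al; rewrite summxE big1 // => i _.
rewrite mxE (nth_map 0%N) ?size_iota // nth_iota // /evec mxE add0n.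
by rewrite (gtn_eqF (leq_trans (ltn_ord i) al)) mulr0.
Qed.

(* Each arriving packet has a coordinate on which everything known so far vanishes. *)
Lemma arrival_mx_Vspace a k (y : 'rV[F]_k) :
  (a + k <= N)%N -> y *m arrival_mx F N a k \in Vspace F N a -> y = 0.
Proof.
move=> akN yV; apply/rowP => i.
have aiN : (a + i < N)%N by apply: leq_trans akN; rewrite ltn_add2l.
have := Vspace_coef0 (l := Ordinal aiN) yV (leq_addr _ _).
rewrite !mxE (bigD1 i) //= mxE eqxx mulr1 big1 ?addr0 // => j ji.
have /negbTE ij : (i : nat) != j by rewrite eq_sym.
by rewrite mxE eqn_add2l ij mulr0.
Qed.

Lemma col_mx_arrival_Vspace m a k (C : 'M[F]_(m, N)) (z : 'rV[F]_(m + k)) :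
  (a + k <= N)%N -> (forall x, x *m C \in Vspace F N a) ->
  z *m col_mx C (arrival_mx F N a k) \in Vspace F N a -> z = row_mx (lsubmx z) 0.
Proof.
move=> akN CV; rewrite -{1}[z]hsubmxK mul_row_col => zV.
suff r0 : rsubmx z = 0 by rewrite -{1}[z]hsubmxK r0.
by apply: (arrival_mx_Vspace akN); rewrite -(addKr (lsubmx z *m C) (_ *m _)) memvD ?memvN.
Qed.

End Arrivals.

Section QueueInvariant.
Variables (F : fieldType) (n N : nat).

(* W is V_Delta(t), and a = A(t). *)
Definition queue_inv (a : nat) (s : state F n N) : Prop :=
  exists W : {vspace 'rV[F]_N},
  [/\ lker (mxlfun (sC s)) == 0%VS,
      (W + mxlfun (sC s) @: fullv)%VS = Vspace F N a,
      (W :&: mxlfun (sC s) @: fullv)%VS = 0%VS,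
      forall j, <<sR s j>>%VS = (W + mxlfun (sC s) @: <<sB s j>>)%VS &
      (\bigcap_(j < n) <<sR s j>>)%VS = W].

Lemma queue_inv_size a s : queue_inv a s ->
  sQ s = (\dim (Vspace F N a) - \dim (\bigcap_(j < n) <<sR s j>>))%N.
Proof.
case=> W [kf <- dW _ ->]; rewrite dimv_disjoint_sum // limg_dim_eq ?(eqP kf) ?capv0 //.
by rewrite dimvf dim_matrix mul1r addKn.
Qed.

Lemma init_queue_inv : (0 < n)%N -> queue_inv 0 (init_state F n N).
Proof.
have vs0 (U : {vspace 'rV[F]_0}) : U = 0%VS.
  by apply/eqP; rewrite -subv0; apply/subvP => x _; rewrite (thinmx0 x) mem0v.
move=> n0; exists 0%VS; split => /=.
- by rewrite (vs0 (lker _)).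
- by rewrite [fullv]vs0 limg0 addv0 /Vspace span_nil.
- by rewrite cap0v.
- by move=> j; rewrite !span_nil limg0 addv0.
- by apply/eqP; rewrite -subv0 (bigcapv_inf (Ordinal n0)) ?span_nil.
Qed.

Lemma arrive_queue_inv a k s : (a + k <= N)%N ->
  queue_inv a s -> queue_inv (a + k)%N (arrive a k s).
Proof.
case: s => Q C Bs Rs akN [W /= [kf eU dW eR eI]].
have CV x : x *m C \in Vspace F N a.
  by rewrite -eU -mxlfunE (subvP (addvSr _ _)) ?memv_img ?memvf.
have WV : (W <= Vspace F N a)%VS by rewrite -eU addvSl.
exists W; split => //=.
- apply/lker0P => x y; rewrite !mxlfunE => /eqP; rewrite -subr_eq0 -mulmxBl => /eqP xy0.
  have zE : x - y = row_mx (lsubmx (x - y)) 0.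
    by apply: (col_mx_arrival_Vspace akN CV); rewrite xy0 mem0v.
  move: xy0; rewrite [in X in X = _]zE mul_row_col mul0mx addr0 -mxlfunE => /eqP.
  rewrite -memv_ker (eqP kf) memv0 => /eqP l0.
  by apply/eqP; rewrite -subr_eq0 zE l0 row_mx0.
- by rewrite limg_mxlfun_col_mx addvA eU -VspaceD.
- apply/eqP; rewrite -subv0 -dW; apply/subvP => v.
  rewrite !memv_cap => /andP[vW /memv_imgP[z _ vz]]; rewrite vW /= vz.
  have zE : z = row_mx (lsubmx z) 0.
    by apply: (col_mx_arrival_Vspace akN CV); rewrite -mxlfunE -vz (subvP WV).
  by rewrite zE mxlfunE mul_row_col mul0mx addr0 -mxlfunE memv_img ?memvf.
- move=> j; rewrite eR !limg_span -map_comp; congr (W + <<_>>)%VS.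
  by apply: eq_map => x /=; rewrite !mxlfunE mul_row_col mul0mx addr0.
Qed.

Lemma span_rcons_transmit Q (C : 'M[F]_(Q, N)) W (Bj : seq 'rV[F]_Q) Rj g (recv : bool) :
  <<Rj>>%VS = (W + mxlfun C @: <<Bj>>)%VS ->
  <<if (0 < Q)%N && recv then rcons Rj (g *m C) else Rj>>%VS =
  (W + mxlfun C @: <<if (g != 0%R) && recv then rcons Bj g else Bj>>)%VS.
Proof.
move=> eR; case: recv; rewrite ?andbF ?andbT //.
have [Q0 | _] /= := posnP Q.
  suff -> : g = 0 by rewrite eqxx.
  by apply/rowP => -[i iQ]; exfalso; move: iQ; rewrite Q0.
rewrite -cats1 span_cat span_seq1 eR -addvA; congr (W + _)%VS.
have [-> | _] /= := eqVneq g 0; first by rewrite mul0mx addv0 ?span_nil.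
by rewrite -cats1 span_cat span_seq1 limgD limg_line mxlfunE.
Qed.

Lemma step48_queue_inv a (recv : 'I_n -> bool) s s' : (0 < n)%N ->
  queue_inv a s -> step48 recv s s' -> queue_inv a s'.
Proof.
case: s => Q C Bs Rs n0 [W /= [kf eU dW eR _]].
case=> g [_ [BD [B2 [Bj2 [/= hBD [hB [hBj [X [hX ->]]]]]]]]] /=.
set f := mxlfun C; set M := rowsmx B2.
have R5E j := span_rcons_transmit g (recv j) (eR j).
have freeB2 : free B2 := catr_free (basis_free hB).
have fullB : (<<BD>> + <<B2>>)%VS = fullv by rewrite -span_cat (span_basis hB) span_idrows.
have capB : (<<BD>> :&: <<B2>>)%VS = 0%VS.
  by apply/directv_addP; move: (basis_free hB); rewrite cat_free => /and3P[].
have imM : (mxlfun M @: fullv)%VS = <<B2>>%VS by rewrite limg_mxlfun rows_rowsmx.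
exists (W + f @: <<BD>>)%VS; rewrite mxlfun_mulmx limg_comp imM; split.
- apply/lker0P => x y; rewrite !comp_lfunE => /(lker0P kf).
  exact: (lker0P (lker_mxlfun_rowsmx freeB2)).
- by rewrite -addvA -limgD fullB.
- exact: addv_limg_disjoint.
- move=> j; rewrite /= R5E -(span_basis (hBj j).1) span_cat limgD addvA.
  by rewrite limg_comp [(mxlfun M @: _)%VS]limg_span (eq_map (@mxlfunE _ _ _ M)) hX.
- by rewrite /= (eq_bigr _ (fun j _ => R5E j)) bigcapv_addv_limg // (span_basis hBD).
Qed.

End QueueInvariant.

Lemma AcumS arr s : Acum arr s.+1 = (Acum arr s + arr s.+1)%N.
Proof. by rewrite /Acum big_nat_recr. Qed.

Lemma leq_Acum arr s t : (s <= t)%N -> (Acum arr s <= Acum arr t)%N.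
Proof. by move=> st; rewrite /Acum (@big_cat_nat _ _ _ s.+1 1 t.+1) //= leq_addr. Qed.

Theorem theorem4 (F : finFieldType) (n : nat) (arr : nat -> nat)
  (rec : nat -> 'I_n -> bool) (N t : nat) (pre mid : nat -> state F n N) :
  (0 < n)%N -> (n < #|F|)%N -> (1 <= t)%N -> (Acum arr t <= N)%N ->
  pre 1%N = init_state F n N ->
  (forall s, (1 <= s <= t)%N -> mid s = arrive (Acum arr s.-1) (arr s) (pre s)) ->
  (forall s, (1 <= s < t)%N -> step48 (rec s) (mid s) (pre s.+1)) ->
  sQ (mid t) =
    (\dim (Vspace F N (Acum arr t)) - \dim (\bigcap_(j < n) <<sR (mid t) j>>))%N.
Proof.
(* n < #|F| only ensures that Step 4 can choose g; the identity holds for any g. *)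
move=> n0 _ t1 AtN pre1 midE stepE.
have mid_inv s : (0 < s <= t)%N ->
    queue_inv (Acum arr s.-1) (pre s) -> queue_inv (Acum arr s) (mid s).
  case: s => // s /andP[_ st] inv_s; rewrite midE ?st //= AcumS.
  by apply: arrive_queue_inv => //; rewrite -AcumS (leq_trans (leq_Acum arr st)).
have pre_inv s : (0 < s <= t)%N -> queue_inv (Acum arr s.-1) (pre s).
  elim: s => [|[|s] IHs] // /andP[_ st].
    by rewrite pre1 /Acum big_geq //; apply: init_queue_inv.
  apply: step48_queue_inv n0 _ (stepE s.+1 _); last by rewrite /= st.
  by apply: mid_inv (IHs _); rewrite /= ltnW.
by apply/queue_inv_size/mid_inv/pre_inv; rewrite t1 leqnn.
Qed.
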